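(* Let $(\Omega,\mu)$ be a measure space with a $\sigma$-additive $\sigma$-finite measure, let $G$ be a discrete group, and let $\{\theta_g\}_{g\in G}$ be a group of (algebra) automorphisms of $L^\infty_\mu(\Omega)$ (with $\theta_{gh}=\theta_g\theta_h$). Let $M$ be the maximal ideal space of $L^\infty_\mu(\Omega)$, $\Gamma:L^\infty_\mu(\Omega)\to C(M)$ the Gelfand isomorphism, and let $t_g:M\to M$ be the homeomorphisms such that $\Gamma(\theta_g(z))(m)=\Gamma(z)(t_g^{-1}(m))$ for all $z\in L^\infty_\mu(\Omega)$, $m\in M$. For each class $\Delta$ of measurable sets (modulo null sets) define $\alpha_g(\Delta)$ by $\theta_g(\chi_\Delta)=\chi_{\alpha_g(\Delta)}$. Then the following are equivalent: (a) $G$ acts metrically freely, i.e. for every finite set $\{g_1,\dots,g_k\}\subset G$ and every measurable $\Delta$ with $\mu(\Delta)>0$ there exists a measurable $\Delta'\subset\Delta$ with $\mu(\Delta')>0$ and $\mu(\alpha_{g_i}(\Delta')\cap\alpha_{g_j}(\Delta'))=0$ for all $i\ne j$; (b) $G$ acts topologically freely on $M$, i.e. for every finite set $\{g_1,\dots,g_k\}\subset G$ and every nonempty open $U\subset M$ there exists a nonempty open $V\subset U$ with $t_{g_i}(V)\cap t_{g_j}(V)=\emptyset$ for all $i\neq j$.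
   Context: $\chi_\Delta$ denotes the characteristic function of $\Delta$ in $L^\infty_\mu(\Omega)$; since $\theta_g(\chi_\Delta)$ is again an idempotent of $L^\infty_\mu(\Omega)$, it is the characteristic function of a (class of) measurable set, which is denoted $\alpha_g(\Delta)$. $\mu(\Delta)>0$ iff $\chi_\Delta\neq 0$. *)

From HB Require Import structures.
From mathcomp Require Import all_boot all_order all_algebra.
From mathcomp Require Import all_classical all_reals all_analysis.
From mathcomp Require Import complex.
Set Implicit Arguments. Unset Strict Implicit. Unset Printing Implicit Defensive.
Import Order.TTheory GRing.Theory Num.Theory.
Local Open Scope classical_set_scope.
Local Open Scope ring_scope.

Section Linfty.
Context {d : measure_display} {T : measurableType d} {R : realType}.
Variable mu : {measure set T -> \bar R}.
Local Notation C := (R[i]).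

Definition Linf (f : T -> C) : Prop :=
  [/\ measurable_fun setT (fun x => complex.Re (f x)),
      measurable_fun setT (fun x => complex.Im (f x)) &
      exists c : R, {ae mu, forall x, `|complex.Re (f x)| <= c /\ `|complex.Im (f x)| <= c}].

Definition aeeq (f g : T -> C) : Prop := {ae mu, forall x, f x = g x}.

Definition chi (A : set T) : T -> C := fun x => if `[< A x >] then 1 else 0.

(* theta acts on representatives and induces a (complex, unital) algebra
   automorphism of L^oo_mu(Omega) = {Linf functions} / aeeq. *)
Definition Linf_automorphism (th : (T -> C) -> (T -> C)) : Prop :=
  [/\ forall f, Linf f -> Linf (th f),
      forall f g, Linf f -> Linf g -> aeeq f g -> aeeq (th f) (th g),
      [/\ 
      forall (a : C) f g, Linf f -> Linf g ->
        aeeq (th (fun x => a * f x + g x)) (fun x => a * th f x + th g x),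
      forall f g, Linf f -> Linf g ->
        aeeq (th (fun x => f x * g x)) (fun x => th f x * th g x) &
      aeeq (th (fun _ => 1)) (fun _ => 1)],
      forall f, Linf f -> aeeq (th f) (fun _ => 0) -> aeeq f (fun _ => 0) &
      forall h, Linf h -> exists2 f, Linf f & aeeq (th f) h].

(* Points of the maximal ideal space M of L^oo: the characters (nonzero
   multiplicative linear functionals) of L^oo, represented as functionals on
   representatives which are compatible with aeeq, and normalized to be 0
   outside L^oo (so that each character has exactly one representative). *)
Definition character (phi : (T -> C) -> C) : Prop :=
  [/\ forall f, ~ Linf f -> phi f = 0,
      forall f g, Linf f -> Linf g -> aeeq f g -> phi f = phi g,
      forall (a : C) f g, Linf f -> Linf g ->
        phi (fun x => a * f x + g x) = a * phi f + phi g,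
      forall f g, Linf f -> Linf g ->
        phi (fun x => f x * g x) = phi f * phi g &
      phi (fun _ => 1) = 1].

Definition max_ideal_space : set ((T -> C) -> C) := [set phi | character phi].

Definition gelfand (z : T -> C) (m : (T -> C) -> C) : C := m z.

(* Gelfand (weak-star) topology on M: the coarsest topology making every
   Gamma(z), z in L^oo, continuous. *)
Definition gelfand_open (U : set ((T -> C) -> C)) : Prop :=
  U `<=` max_ideal_space /\
  forall phi, U phi ->
    exists n (zs : 'I_n -> (T -> C)) (e : R),
      [/\ 0 < e, forall i, Linf (zs i) &
          [set psi | max_ideal_space psi /\
             forall i, `|gelfand (zs i) psi - gelfand (zs i) phi| < (e%:C)%C]
          `<=` U].

(* (a) metrically free action; alpha_g(D) is any measurable A with
   theta_g(chi_D) = chi_A in L^oo. *)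
Definition metrically_free (G : Type) (th : G -> (T -> C) -> (T -> C)) : Prop :=
  forall k (gs : 'I_k -> G), injective gs ->
  forall D, measurable D -> (0 < mu D)%E ->
  exists D', [/\ measurable D', D' `<=` D, (0 < mu D')%E &
    forall i j, i != j -> forall A B, measurable A -> measurable B ->
      aeeq (th (gs i) (chi D')) (chi A) ->
      aeeq (th (gs j) (chi D')) (chi B) -> mu (A `&` B) = 0%E].

Definition topologically_free (G : Type)
    (t : G -> ((T -> C) -> C) -> ((T -> C) -> C)) : Prop :=
  forall k (gs : 'I_k -> G), injective gs ->
  forall U, gelfand_open U -> U !=set0 ->
  exists V, [/\ gelfand_open V, V `<=` U, V !=set0 &
    forall i j, i != j -> t (gs i) @` V `&` t (gs j) @` V = set0].

End Linfty.

(* The sets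
   N(A) = {m | m(chi_A) = 1}, for measurable A, are clopen and form a basis of
   the Gelfand topology: m lies in N(A) for A = {|z - m(z)| < e/2}, and every
   character in N(A) maps z within e of m(z).  N(A) is nonempty iff
   mu(A) > 0 (characters with m(chi_A) = 1 are limits along ultrafilters
   refining "almost everywhere on A"), N(A) and N(B) meet iff
   mu(A \cap B) > 0, and t_g maps N(D) onto N(alpha_g(D)).  Through this
   dictionary, disjointness of the t_g(V) for a basic V = N(D') is
   disjointness of the alpha_g(D') up to null sets, so the two freeness
   conditions are the same statement. *)
From HB Require Import structures.
From mathcomp Require Import all_boot all_order all_algebra.
From mathcomp Require Import all_classical all_reals all_analysis.
From mathcomp Require Import complex.
From mathcomp Require Import measurable_realfun.
From mathcomp Require Import ring lra.
Import Order.TTheory GRing.Theory Num.Theory numFieldNormedType.Exports.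
Set Implicit Arguments. Unset Strict Implicit. Unset Printing Implicit Defensive.
Local Open Scope classical_set_scope.
Local Open Scope ring_scope.

Section ComplexParts.
Context {R : realType}.
Local Notation C := (R[i]).
Local Notation Re := complex.Re.
Local Notation Im := complex.Im.
Implicit Types x y : C.

Lemma cReD x y : Re (x + y) = Re x + Re y. Proof. by case: x y => a b [c d]. Qed.
Lemma cImD x y : Im (x + y) = Im x + Im y. Proof. by case: x y => a b [c d]. Qed.
Lemma cReM x y : Re (x * y) = Re x * Re y - Im x * Im y.
Proof. by case: x y => a b [c d]. Qed.
Lemma cImM x y : Im (x * y) = Re x * Im y + Im x * Re y.
Proof. by case: x y => a b [c d]. Qed.

Lemma complex_eq x y : Re x = Re y -> Im x = Im y -> x = y.
Proof. by case: x y => a b [c d] /= -> ->. Qed.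

Lemma normRe_le x : ((`|Re x|)%:C)%C <= `|x|.
Proof.
rewrite normc_def lecR -sqrtr_sqr; apply: ler_wsqrtr.
by rewrite lerDl sqr_ge0.
Qed.

Lemma normIm_le x : ((`|Im x|)%:C)%C <= `|x|.
Proof.
rewrite normc_def lecR -sqrtr_sqr; apply: ler_wsqrtr.
by rewrite lerDr sqr_ge0.
Qed.

Lemma norm_le_ReIm x : `|x| <= ((`|Re x| + `|Im x|)%:C)%C.
Proof.
rewrite normc_def lecR -[X in _ <= X]ger0_norm ?addr_ge0 //.
rewrite -sqrtr_sqr; apply: ler_wsqrtr.
rewrite sqrrD -[Re x ^+ 2]real_normK ?num_real // -[Im x ^+ 2]real_normK ?num_real //.
by rewrite -addrA lerD2l lerDr mulrn_wge0 ?mulr_ge0.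
Qed.

Lemma normC_ltE x (r : R) : 0 < r ->
  (`|x| < (r%:C)%C) = (Re x ^+ 2 + Im x ^+ 2 < r ^+ 2).
Proof.
move=> r0; rewrite normc_def ltcR -[RHS]ltr_sqrt ?exprn_gt0 //.
by rewrite sqrtr_sqr ger0_norm // ltW.
Qed.

Lemma normC_geE x (r : R) : 0 < r ->
  ((r%:C)%C <= `|x|) = (r ^+ 2 <= Re x ^+ 2 + Im x ^+ 2).
Proof.
move=> r0; rewrite normc_def lecR -[RHS]ler_sqrt ?addr_ge0 ?sqr_ge0 //.
by rewrite sqrtr_sqr ger0_norm // ltW.
Qed.

End ComplexParts.

Lemma norm_div_max_sqr_le {R : realFieldType} (a b e : R) : 0 < e ->
  `|a / Num.max (a ^+ 2 + b ^+ 2) (e ^+ 2)| <= e ^- 2 + 1.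
Proof.
move=> e0; set m := Num.max _ _.
have m_ge : a ^+ 2 + b ^+ 2 <= m by rewrite le_max lexx.
have m_ge_e : e ^+ 2 <= m by rewrite le_max lexx orbT.
have e2_gt0 : 0 < e ^+ 2 by rewrite exprn_gt0.
have m0 : 0 < m by apply: lt_le_trans m_ge_e.
rewrite normrM normfV (gtr0_norm m0) ler_pdivrMr //.
(* |a| <= 1 + a^2 <= e^-2 m + m *)
have a_le : `|a| <= 1 + a ^+ 2.
  by case: (lerP 0 a) => ha; [rewrite ger0_norm //|rewrite ltr0_norm //]; nra.
have : 1 <= e ^- 2 * m by rewrite -ler_pdivrMl ?invr_gt0 // invrK mulr1.
have := sqr_ge0 b; rewrite mulrDl mul1r; lra.
Qed.

Lemma measurable_funV_ge d (T : measurableType d) (R : realType) (f : T -> R) (e : R) :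
  0 < e -> measurable_fun setT f -> (forall x, e <= f x) ->
  measurable_fun setT (fun x => (f x)^-1).
Proof.
move=> e0 mf f_ge; rewrite (_ : (fun x => _) = (@GRing.inv R) \o f) //.
have mpos : measurable (`]0, +oo[%classic : set R) by exact: measurable_itv.
have f_pos : f @` setT `<=` `]0, +oo[%classic.
  by move=> _ [x _ <-]; rewrite /= in_itv /= andbT (lt_le_trans e0).
have minv : measurable_fun (`]0, +oo[%classic : set R) (@GRing.inv R).
  apply: open_continuous_measurable_fun; first by rewrite set_itvE; exact: open_gt.
  by move=> x; rewrite inE /= in_itv /= andbT => x0; apply: inv_continuous; rewrite gt_eqF.
exact: measurable_comp mpos f_pos minv mf.
Qed.

Section Linfty.
Context {d : measure_display} {T : measurableType d} {R : realType}.
Variable mu : {measure set T -> \bar R}.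
Local Notation C := (R[i]).
Local Notation Re := complex.Re.
Local Notation Im := complex.Im.
Implicit Types (f g : T -> C) (A B : set T).

Definition cmeasurable f :=
  measurable_fun setT (fun x => Re (f x)) /\ measurable_fun setT (fun x => Im (f x)).

Lemma Linf_of_bounded f : cmeasurable f ->
  (exists K : R, {ae mu, forall x, `|f x| <= (K%:C)%C}) -> Linf mu f.
Proof.
move=> [mRe mIm] [K fK]; split => //; exists K.
apply: filterS fK => x fx; split; rewrite -lecR; apply: le_trans fx.
  exact: normRe_le.
exact: normIm_le.
Qed.

Lemma Linf_bounded f : Linf mu f -> exists K : R, {ae mu, forall x, `|f x| <= (K%:C)%C}.
Proof.
move=> [_ _ [c fc]]; exists (c + c); apply: filterS fc => x [hRe hIm].
by apply: le_trans (norm_le_ReIm _) _; rewrite lecR lerD.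
Qed.

Lemma Linf_cmeasurable f : Linf mu f -> cmeasurable f.
Proof. by case. Qed.

Lemma cmeasurable_lin (a : C) f g : cmeasurable f -> cmeasurable g ->
  cmeasurable (fun x => a * f x + g x).
Proof.
move=> [f1 f2] [g1 g2]; split.
  under eq_fun do rewrite cReD cReM.
  by apply: measurable_funD => //; apply: measurable_funB; exact: measurable_funM.
under eq_fun do rewrite cImD cImM.
by apply: measurable_funD => //; apply: measurable_funD; exact: measurable_funM.
Qed.

Lemma cmeasurable_mul f g : cmeasurable f -> cmeasurable g ->
  cmeasurable (fun x => f x * g x).
Proof.
move=> [f1 f2] [g1 g2]; split.
  by under eq_fun do rewrite cReM; apply: measurable_funB; exact: measurable_funM.
by under eq_fun do rewrite cImM; apply: measurable_funD; exact: measurable_funM.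
Qed.

Lemma cmeasurable_chi A : measurable A -> cmeasurable (chi A).
Proof.
move=> mA; split; last first.
  rewrite (_ : (fun x => _) = cst 0); first exact: measurable_cst.
  by apply: funext => x; rewrite /chi; case: asboolP.
rewrite (_ : (fun x => _) = \1_A); first exact: measurable_indic.
apply: funext => x; rewrite /chi /indic.
by case: asboolP => /= [Ax|nAx]; [rewrite (mem_set Ax)|rewrite (memNset nAx)].
Qed.

Lemma Linf_cst (c : C) : Linf mu (fun _ => c).
Proof.
apply: Linf_of_bounded; first by split; exact: measurable_cst.
by exists (Re `|c|); apply: nearW => x; rewrite RRe_real ?normr_real.
Qed.

Lemma Linf_lin (a : C) f g : Linf mu f -> Linf mu g -> Linf mu (fun x => a * f x + g x).
Proof.
move=> Lf Lg; apply: Linf_of_bounded; first by apply: cmeasurable_lin; exact: Linf_cmeasurable.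
have [Kf fK] := Linf_bounded Lf; have [Kg gK] := Linf_bounded Lg.
exists (Re `|a| * Kf + Kg); apply: filterS2 fK gK => x fx gx.
apply: le_trans (ler_normD _ _) _; rewrite rmorphD rmorphM /=.
by apply: lerD => //; rewrite normrM; apply: ler_wpM2l.
Qed.

Lemma Linf_mul f g : Linf mu f -> Linf mu g -> Linf mu (fun x => f x * g x).
Proof.
move=> Lf Lg; apply: Linf_of_bounded; first by apply: cmeasurable_mul; exact: Linf_cmeasurable.
have [Kf fK] := Linf_bounded Lf; have [Kg gK] := Linf_bounded Lg.
exists (Kf * Kg); apply: filterS2 fK gK => x fx gx.
by rewrite normrM rmorphM /= ler_pM.
Qed.

Lemma Linf_chi A : measurable A -> Linf mu (chi A).
Proof.
move=> mA; apply: Linf_of_bounded; first exact: cmeasurable_chi.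
by exists 1; apply: nearW => x; rewrite /chi; case: asboolP; rewrite ?normr1 ?normr0.
Qed.


Lemma chiI A B : chi (A `&` B) = (fun x => chi A x * chi B x :> C).
Proof.
apply: funext => x; rewrite /chi.
case: asboolP => [[Ax Bx]|nABx]; first by rewrite !asboolT // mulr1.
by case: asboolP => Ax; case: asboolP => Bx; rewrite ?mulr0 ?mul0r //; case: nABx.
Qed.

Lemma chiT : chi setT = (fun _ : T => 1 : C).
Proof. by apply: funext => x; rewrite /chi asboolT. Qed.

Lemma chiC A : chi (~` A) = (fun x => -1 * chi A x + 1 :> C).
Proof.
apply: funext => x; rewrite /chi; case: (pselect (A x)) => Ax.
  by rewrite asboolF ?asboolT // mulr1 addNr.
by rewrite asboolT ?asboolF // mulr0 add0r.
Qed.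

End Linfty.

Section Characters.
Context {d : measure_display} {T : measurableType d} {R : realType}.
Variable mu : {measure set T -> \bar R}.
Local Notation C := (R[i]).
Implicit Types (f g z : T -> C) (A B : set T).

Section character.
Variable phi : (T -> C) -> C.
Hypothesis phi_char : character mu phi.

Lemma char_ae f g : Linf mu f -> Linf mu g -> aeeq mu f g -> phi f = phi g.
Proof. by case: phi_char => _ + _ _ _; apply. Qed.

Lemma char_lin (a : C) f g : Linf mu f -> Linf mu g ->
  phi (fun x => a * f x + g x) = a * phi f + phi g.
Proof. by case: phi_char => _ _ + _ _; apply. Qed.

Lemma char_mul f g : Linf mu f -> Linf mu g ->
  phi (fun x => f x * g x) = phi f * phi g.
Proof. by case: phi_char => _ _ _ + _; apply. Qed.

Lemma char1 : phi (fun _ => 1) = 1.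
Proof. by case: phi_char. Qed.

Lemma char0 : phi (fun _ => 0) = 0.
Proof.
have := char_lin 1 (Linf_cst mu 0) (Linf_cst mu 0).
under eq_fun do rewrite mulr0 addr0.
by rewrite mul1r => /eqP; rewrite -subr_eq subrr eq_sym => /eqP.
Qed.

Lemma char_cst (c : C) : phi (fun _ => c) = c.
Proof.
have := char_lin c (Linf_cst mu 1) (Linf_cst mu 0).
by under eq_fun do rewrite mulr1 addr0; rewrite char1 char0 mulr1 addr0.
Qed.

Lemma char_chiI A B : measurable A -> measurable B ->
  phi (chi (A `&` B)) = phi (chi A) * phi (chi B).
Proof. by move=> mA mB; rewrite chiI char_mul //; exact: Linf_chi. Qed.

Lemma char_chiC A : measurable A -> phi (chi (~` A)) = 1 - phi (chi A).
Proof.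
move=> mA; rewrite chiC char_lin; first by rewrite char1 mulN1r addrC.
  exact: Linf_chi.
exact: Linf_cst.
Qed.

Lemma char_chi01 A : measurable A -> phi (chi A) = 0 \/ phi (chi A) = 1.
Proof.
move=> mA; have := char_chiI mA mA; rewrite setIid => /eqP.
rewrite -subr_eq0 -{1}[phi (chi A)]mulr1 -mulrBr mulf_eq0 subr_eq0 eq_sym.
by case/orP => /eqP; [left|right].
Qed.

Lemma char_chi_null A : measurable A -> mu A = 0%E -> phi (chi A) = 0.
Proof.
move=> mA A0; rewrite -char0; apply: char_ae; [exact: Linf_chi|exact: Linf_cst|].
by exists A; split => // x /=; rewrite /chi; case: asboolP.
Qed.

Lemma char_chi_pos A : measurable A -> phi (chi A) = 1 -> (0 < mu A)%E.
Proof.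
move=> mA pA; rewrite lt0e measure_ge0 andbT; apply/eqP => A0.
by move: pA; rewrite char_chi_null // => /eqP; rewrite eq_sym oner_eq0.
Qed.

Lemma char_chi_le A B : measurable A -> measurable B -> A `<=` B ->
  phi (chi A) = 1 -> phi (chi B) = 1.
Proof.
move=> mA mB AB pA.
by have := char_chiI mA mB; rewrite setIidl // pA mul1r.
Qed.

End character.

(* A truncated inverse of [u]: it equals [1 / u x] wherever [|u x| >= e] and
   stays bounded by [e^-2 + 1] everywhere. *)
Definition inv_away (u : T -> C) (e : R) : T -> C := fun x =>
  let m := Num.max (complex.Re (u x) ^+ 2 + complex.Im (u x) ^+ 2) (e ^+ 2) in
  ((complex.Re (u x) / m) +i* (- (complex.Im (u x) / m)))%C.

Lemma Linf_inv_away u e : 0 < e -> Linf mu u -> Linf mu (inv_away u e).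
Proof.
move=> e0 [mRe mIm _].
have mm : measurable_fun setT (fun x =>
    (Num.max (complex.Re (u x) ^+ 2 + complex.Im (u x) ^+ 2) (e ^+ 2))^-1).
  apply: (@measurable_funV_ge _ _ _ _ (e ^+ 2)); first by rewrite exprn_gt0.
    apply: measurable_maxr; last exact: measurable_cst.
    by apply: measurable_funD; exact: measurable_funX.
  by move=> x; rewrite le_max lexx orbT.
split => /=.
- exact: measurable_funM.
- by apply: measurable_funN; exact: measurable_funM.
- exists (e ^- 2 + 1); apply: nearW => x; split => /=.
    exact: norm_div_max_sqr_le.
  by rewrite normrN addrC; exact: norm_div_max_sqr_le.
Qed.

Lemma inv_awayK u e x : 0 < e -> (e%:C)%C <= `|u x| -> inv_away u e x * u x = 1.
Proof.
move=> e0; rewrite normC_geE // /inv_away => ue.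
have s0 : complex.Re (u x) ^+ 2 + complex.Im (u x) ^+ 2 != 0.
  by rewrite gt_eqF // (lt_le_trans _ ue) // exprn_gt0.
rewrite max_l //; apply: complex_eq; rewrite ?cReM ?cImM /=; last by ring.
by field.
Qed.

(* If [z] stays at distance [e > 0] from [lam] on [B] and [phi] sees [B], then
   [chi B = (chi B / (z - lam)) * (z - lam)] forces [phi z <> lam]. *)
Lemma char_neq_of_away phi z (lam : C) B e : character mu phi -> Linf mu z ->
  measurable B -> 0 < e -> (forall x, B x -> (e%:C)%C <= `|z x - lam|) ->
  phi (chi B) = 1 -> phi z <> lam.
Proof.
move=> phi_char Lz mB e0 zB pB phiz.
pose u x := 1 * z x + - lam.
have Lu : Linf mu u := Linf_lin 1 Lz (Linf_cst mu (- lam)).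
pose w x := chi B x * inv_away u e x.
have Lw : Linf mu w := Linf_mul (Linf_chi mu mB) (Linf_inv_away e0 Lu).
have wu : (fun x => w x * u x) = chi B.
  apply: funext => x; rewrite /w -mulrA; case: (pselect (B x)) => Bx.
    by rewrite inv_awayK ?mulr1 // /u mul1r zB.
  by rewrite /chi asboolF // !mul0r.
have := char_mul phi_char Lw Lu; rewrite wu pB (char_lin phi_char) //; last exact: Linf_cst.
by rewrite char_cst // phiz mul1r subrr mulr0 => /eqP; rewrite oner_eq0.
Qed.

End Characters.

Section GelfandTopology.
Context {d : measure_display} {T : measurableType d} {R : realType}.
Variable mu : {measure set T -> \bar R}.
Local Notation C := (R[i]).
Implicit Types (z : T -> C) (A B : set T).

(* Take [A = {x | |z x - phi z| < e/2}]; its complement is seen by no character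
   mapping [z] to [phi z], and on [A] the function [z] keeps away from any value
   at distance [e] from [phi z]. *)
Lemma char_approx phi z e : character mu phi -> Linf mu z -> 0 < e ->
  exists A, [/\ measurable A, phi (chi A) = 1 &
    forall psi, character mu psi -> psi (chi A) = 1 -> `|psi z - phi z| < (e%:C)%C].
Proof.
move=> phi_char Lz e0; pose c := phi z.
pose s x := complex.Re (1 * z x + - c) ^+ 2 + complex.Im (1 * z x + - c) ^+ 2.
have ms : measurable_fun setT s.
  have [mRe mIm] := Linf_cmeasurable (Linf_lin 1 Lz (Linf_cst mu (- c))).
  by apply: measurable_funD; exact: measurable_funX.
have e2 : 0 < e / 2 by rewrite divr_gt0.
pose A := s @^-1` `]-oo, (e / 2) ^+ 2[.
have mA : measurable A by rewrite -[A]setTI; exact: ms.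
have AE x : A x <-> `|z x - c| < ((e / 2)%:C)%C.
  by rewrite /A /preimage /= in_itv /= normC_ltE // /s mul1r.
exists A; split => //.
  case: (char_chi01 phi_char mA) => // pA0; exfalso.
  have pAC : phi (chi (~` A)) = 1 by rewrite (char_chiC phi_char mA) pA0 subr0.
  apply: (char_neq_of_away phi_char Lz (measurableC mA) e2 _ pAC (erefl c)).
  move=> x nAx; rewrite real_leNgt ?normr_real //; last by rewrite realE lecR ltW.
  by apply/negP => /(AE x).
move=> psi psi_char pA; rewrite real_ltNge ?normr_real //; last by rewrite realE lecR ltW.
apply/negP => psi_far.
apply: (char_neq_of_away psi_char Lz mA e2 _ pA (erefl (psi z))) => x /(AE x) zx.
have : (e%:C)%C <= `|z x - psi z| + ((e / 2)%:C)%C.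
  apply: (le_trans psi_far).
  have -> : psi z - c = (psi z - z x) + (z x - c) by rewrite addrA subrK.
  by apply: (le_trans (ler_normD _ _)); rewrite distrC lerD // ltW.
by rewrite -lerBlDr -rmorphB /= {1}(splitr e) addrK.
Qed.

Definition gelfand_supp A := [set psi | max_ideal_space mu psi /\ psi (chi A) = 1].

Lemma gelfand_supp_open A : measurable A -> gelfand_open mu (gelfand_supp A).
Proof.
move=> mA; split; first by move=> psi [].
move=> phi [phi_char pA]; exists 1%N, (fun _ => chi A), 1; split => //.
  by move=> _; exact: Linf_chi.
move=> psi [psi_char /(_ ord0)]; rewrite /gelfand pA => psi_near; split => //.
case: (char_chi01 psi_char mA) => // psiA0; move: psi_near.
by rewrite psiA0 sub0r normrN normr1 ltcR ltxx.
Qed.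

Lemma gelfand_open_supp U phi : gelfand_open mu U -> U phi ->
  exists A, [/\ measurable A, phi (chi A) = 1 & gelfand_supp A `<=` U].
Proof.
move=> [sUM oU] Uphi; have phi_char : character mu phi := sUM _ Uphi.
have [n [zs [e [e0 Lzs sU]]]] := oU _ Uphi.
have /choice [As As_approx] i := char_approx phi_char (Lzs i) e0.
pose A := \big[setI/setT]_(i < n) As i.
have [mA pA] : measurable A /\ phi (chi A) = 1.
  apply: (big_ind (fun B => measurable B /\ phi (chi B) = 1)).
  - by rewrite chiT (char1 phi_char).
  - move=> B1 B2 [mB1 pB1] [mB2 pB2].
    by rewrite (char_chiI phi_char) // pB1 pB2 mulr1; split => //; exact: measurableI.
  - by move=> i _; have [] := As_approx i.
exists A; split => // psi [psi_char psiA]; apply: sU; split => // i.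
have [mAi _ approx] := As_approx i; apply: approx => //.
by apply: (char_chi_le psi_char mA mAi _ psiA); rewrite /A (bigD1 i) //=; exact: subIsetl.
Qed.

End GelfandTopology.

Lemma ultra_fmap {T U : Type} (f : T -> U) (F : set_system T) :
  UltraFilter F -> UltraFilter (f @ F).
Proof.
move=> FU; split; first exact: fmap_proper_filter.
move=> H H_filter sFH; apply/seteqP; split => // S HS.
case: (in_ultra_setVsetC (f @^-1` S) FU) => // FnS.
have HnS : H (~` S) by exact: sFH.
by have := filter_not_empty H; rewrite -(setICr S); case; exact: filterI.
Qed.

Lemma ultra_cvg_bounded {T : Type} {R : realType} (F : set_system T) (h : T -> R) (c : R) :
  UltraFilter F -> F [set x | `|h x| <= c] -> h @ F --> lim (h @ F).
Proof.
move=> FU Fh; have hF := fmap_proper_filter h (@ultra_proper _ F FU).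
have Fc : F (h @^-1` `[- c, c]%classic).
  by apply: filterS Fh => x /= hx; rewrite in_itv /= -ler_norml.
have [p [_ clp]] := segment_compact hF Fc.
have hp : h @ F --> p by move: clp; rewrite (ultra_cvg_clusterE (ultra_fmap h FU)).
by rewrite (cvg_lim _ hp).
Qed.

Lemma lim_fmap_eq_near {T : Type} {R : realType} (F : set_system T) (h1 h2 : T -> R) :
  Filter F -> F [set x | h1 x = h2 x] -> lim (h1 @ F) = lim (h2 @ F).
Proof.
move=> FF Fh; congr lim; apply/funext => S; apply/propext.
split => FS.
  change (F (h2 @^-1` S)).
  by apply: (filterS2 _ _ (FS : F (h1 @^-1` S)) Fh) => x /= Sx e; rewrite -e.
change (F (h1 @^-1` S)).
by apply: (filterS2 _ _ (FS : F (h2 @^-1` S)) Fh) => x /= Sx e; rewrite e.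
Qed.

Section CharacterExistence.
Context {d : measure_display} {T : measurableType d} {R : realType}.
Variable mu : {measure set T -> \bar R}.
Local Notation C := (R[i]).
Local Notation Re := complex.Re.
Local Notation Im := complex.Im.
Implicit Types (f g : T -> C) (A : set T).

Definition ae_within A : set_system T :=
  fun S => exists N, [/\ measurable N, mu N = 0%E & A `&` ~` N `<=` S].

Lemma ae_within_proper A : measurable A -> (0 < mu A)%E -> ProperFilter (ae_within A).
Proof.
move=> mA muA; apply: Build_ProperFilter_ex.
  move=> S [N [mN N0 sS]]; apply: contrapT => S0.
  have AN : A `<=` N.
    by move=> x Ax; apply: contrapT => nNx; apply: S0; exists x; exact: sS.
  have muAN := le_measure mu (mem_set mA) (mem_set mN) AN.
  have muN : (mu N <= 0)%E by rewrite N0.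
  by have := lt_le_trans muA (le_trans muAN muN); rewrite ltxx.
split.
- by exists set0; split => //; rewrite measure0.
- move=> P Q [N1 [m1 n1 s1]] [N2 [m2 n2 s2]]; exists (N1 `|` N2); split.
  + exact: measurableU.
  + apply/le_anti; rewrite measure_ge0 andbT.
    have muN1 : (mu N1 <= 0)%E by rewrite n1.
    have muN2 : (mu N2 <= 0)%E by rewrite n2.
    by apply: le_trans (measureU2 mu m1 m2) _; rewrite -(adde0 0%E) leeD.
  + by move=> x [Ax nNx]; split; [apply: s1|apply: s2]; split => // Nx; apply: nNx;
      [left|right].
- by move=> P Q PQ [N [mN N0 sP]]; exists N; split => //; exact: subset_trans PQ.
Qed.

Lemma ae_within_ae A (P : T -> Prop) : {ae mu, forall x, P x} -> ae_within A [set x | P x].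
Proof.
move=> [N [mN N0 sN]]; exists N; split => // x [_ nNx].
by apply: contrapT => nPx; apply: nNx; exact: sN.
Qed.

Lemma ae_within_self A : ae_within A A.
Proof. by exists set0; split => //; rewrite measure0. Qed.

(* The character "limit along the ultrafilter [F]": it is well defined on
   [L^oo] as soon as [F] contains every set of full measure. *)
Definition ultra_char (F : set_system T) f : C :=
  if `[< Linf mu f >] then (lim ((fun x => Re (f x)) @ F) +i* lim ((fun x => Im (f x)) @ F))%C else 0.

Section ultra_char.
Variable F : set_system T.
Hypothesis FU : UltraFilter F.
Hypothesis F_ae : forall P : T -> Prop, {ae mu, forall x, P x} -> F [set x | P x].

Lemma ultra_cvgRe f : Linf mu f -> (fun x => Re (f x)) @ F --> lim ((fun x => Re (f x)) @ F).
Proof.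
move=> [_ _ [c fc]]; apply: (@ultra_cvg_bounded _ _ _ _ c) => //.
by apply: filterS (F_ae fc) => x [].
Qed.

Lemma ultra_cvgIm f : Linf mu f -> (fun x => Im (f x)) @ F --> lim ((fun x => Im (f x)) @ F).
Proof.
move=> [_ _ [c fc]]; apply: (@ultra_cvg_bounded _ _ _ _ c) => //.
by apply: filterS (F_ae fc) => x [].
Qed.

Lemma ultra_char_character : character mu (ultra_char F).
Proof.
have FF := @ultra_proper _ F FU.
split.
- by move=> f Lf; rewrite /ultra_char asboolF.
- move=> f g Lf Lg fg; rewrite /ultra_char !asboolT //.
  by congr (_ +i* _)%C; apply: lim_fmap_eq_near; apply: filterS (F_ae fg) => x /= ->.
- move=> a f g Lf Lg; rewrite /ultra_char !asboolT //; last exact: Linf_lin.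
  apply: complex_eq; rewrite ?cReD ?cReM ?cImD ?cImM /=; apply: cvg_lim => //.
    under eq_fun do rewrite cReD cReM.
    apply: cvgD; last exact: ultra_cvgRe.
    by apply: cvgB; apply: cvgMl_tmp; [exact: ultra_cvgRe|exact: ultra_cvgIm].
  under eq_fun do rewrite cImD cImM.
  apply: cvgD; last exact: ultra_cvgIm.
  by apply: cvgD; apply: cvgMl_tmp; [exact: ultra_cvgIm|exact: ultra_cvgRe].
- move=> f g Lf Lg; rewrite /ultra_char !asboolT //; last exact: Linf_mul.
  apply: complex_eq; rewrite ?cReM ?cImM /=; apply: cvg_lim => //.
    under eq_fun do rewrite cReM.
    by apply: cvgB; apply: cvgM; [exact: ultra_cvgRe|exact: ultra_cvgRe|
      exact: ultra_cvgIm|exact: ultra_cvgIm].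
  under eq_fun do rewrite cImM.
  by apply: cvgD; apply: cvgM; [exact: ultra_cvgRe|exact: ultra_cvgIm|
    exact: ultra_cvgIm|exact: ultra_cvgRe].
- rewrite /ultra_char asboolT; last exact: Linf_cst.
  by apply: complex_eq; apply: cvg_lim => //; exact: cvg_cst.
Qed.

Lemma ultra_char_chi A : measurable A -> F A -> ultra_char F (chi A) = 1.
Proof.
move=> mA FA; rewrite /ultra_char asboolT; last exact: Linf_chi.
have FF := @ultra_proper _ F FU.
apply: complex_eq; apply: cvg_lim => //; apply: cvg_near_cst;
  by apply: filterS FA => x Ax; rewrite /chi asboolT.
Qed.

End ultra_char.

Lemma gelfand_supp_neq0 A : measurable A -> (0 < mu A)%E -> gelfand_supp mu A !=set0.
Proof.
move=> mA muA; have := ae_within_proper mA muA.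
move=> /ultraFilterLemma[F [FU sAF]].
have F_ae P : {ae mu, forall x, P x} -> F [set x | P x].
  by move=> aeP; apply: sAF; exact: ae_within_ae.
exists (ultra_char F); split; first exact: ultra_char_character.
by apply: ultra_char_chi => //; apply: sAF; exact: ae_within_self.
Qed.

End CharacterExistence.

Section Freeness.
Context {d : measure_display} {T : measurableType d} {R : realType}.
Variable mu : {measure set T -> \bar R}.
Local Notation C := (R[i]).
Local Notation M := ((T -> C) -> C).
Variables (G : Type) (th : G -> (T -> C) -> (T -> C)) (t : G -> M -> M).
Hypothesis th_aut : forall g, Linf_automorphism mu (th g).
Hypothesis t_bij : forall g, set_bij (max_ideal_space mu) (max_ideal_space mu) (t g).
Hypothesis t_gelfand : forall g m z, max_ideal_space mu m -> Linf mu z ->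
  gelfand (th g z) (t g m) = gelfand z m.

(* [th g] maps idempotents to idempotents, which are the [chi A]. *)
Lemma Linf_automorphism_chi g D : measurable D ->
  exists2 A, measurable A & aeeq mu (th g (chi D)) (chi A).
Proof.
have [Lth _ [_ th_mul _] _ _] := th_aut g; move=> mD.
have LD := Linf_chi mu mD; pose f := th g (chi D).
have [mRe mIm] := Linf_cmeasurable (Lth _ LD).
pose A := [set x | complex.Re (f x) = 1 /\ complex.Im (f x) = 0].
exists A.
  have mRe1 := mRe measurableT _ (measurable_set1 1).
  have mIm0 := mIm measurableT _ (measurable_set1 0).
  by rewrite !setTI in mRe1 mIm0; exact: measurableI.
have := th_mul _ _ LD LD; rewrite -chiI setIid.
apply: filterS => x /eqP; rewrite -/f -subr_eq0 -{1}[f x]mulr1 -mulrBr mulf_eq0.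
rewrite subr_eq0 => /orP[] /eqP fx; rewrite /chi.
  by rewrite fx asboolF // /A /= fx => -[/eqP]; rewrite eq_sym oner_eq0.
by rewrite -fx asboolT // /A /= -fx.
Qed.

Lemma image_gelfand_supp g D A : measurable D -> measurable A ->
  aeeq mu (th g (chi D)) (chi A) -> t g @` gelfand_supp mu D = gelfand_supp mu A.
Proof.
move=> mD mA thD; have [t_fun _ t_surj] := t_bij g.
have [Lth _ _ _ _] := th_aut g.
have t_chi m : max_ideal_space mu m -> t g m (chi A) = m (chi D).
  move=> m_char; have := t_gelfand g m_char (Linf_chi mu mD); rewrite /gelfand => <-.
  by rewrite (char_ae (t_fun _ m_char) (Lth _ (Linf_chi mu mD)) (Linf_chi mu mA) thD).
apply/seteqP; split.
  by move=> _ [m [m_char mD1] <-]; split; [exact: t_fun|rewrite t_chi].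
move=> psi [psi_char psiA]; have [m m_char tm] := t_surj psi psi_char.
by exists m => //; split => //; rewrite -t_chi // tm.
Qed.

Lemma metrically_free_topologically_free : metrically_free mu th -> topologically_free mu t.
Proof.
move=> mfree k gs gs_inj U oU [phi Uphi].
have [A [mA phiA sAU]] := gelfand_open_supp oU Uphi.
have phi_char : character mu phi := oU.1 _ Uphi.
have [D [mD sDA muD disj]] := mfree k gs gs_inj A mA (char_chi_pos phi_char mA phiA).
exists (gelfand_supp mu D); split.
- exact: gelfand_supp_open.
- by move=> psi [psi_char psiD]; apply: sAU; split => //; exact: (char_chi_le psi_char mD mA sDA).
- exact: gelfand_supp_neq0.
move=> i j ij; apply/seteqP; split => // psi.
have [Ai mAi thAi] := Linf_automorphism_chi (gs i) mD.
have [Aj mAj thAj] := Linf_automorphism_chi (gs j) mD.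
rewrite (image_gelfand_supp mD mAi thAi) (image_gelfand_supp mD mAj thAj).
move=> [[psi_char psiAi] [_ psiAj]].
have := char_chi_null psi_char (measurableI _ _ mAi mAj) (disj i j ij _ _ mAi mAj thAi thAj).
by rewrite (char_chiI psi_char) // psiAi psiAj mulr1 => /eqP; rewrite oner_eq0.
Qed.

Lemma topologically_free_metrically_free : topologically_free mu t -> metrically_free mu th.
Proof.
move=> tfree k gs gs_inj D mD muD.
have [V [oV sVD [phi Vphi] disj]] :=
  tfree k gs gs_inj _ (gelfand_supp_open mu mD) (gelfand_supp_neq0 mD muD).
have [E [mE phiE sEV]] := gelfand_open_supp oV Vphi.
have [phi_char phiD] := sVD _ Vphi.
have mED : measurable (E `&` D) by exact: measurableI.
exists (E `&` D); split => //.
  by apply: (char_chi_pos phi_char mED); rewrite (char_chiI phi_char) // phiE phiD mulr1.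
move=> i j ij A B mA mB thA thB; apply/eqP/negP => /negP AB_neq0.
have muAB : (0 < mu (A `&` B))%E by rewrite lt0e AB_neq0 measure_ge0.
have [psi [psi_char psiAB]] := gelfand_supp_neq0 (measurableI _ _ mA mB) muAB.
have sEDV : gelfand_supp mu (E `&` D) `<=` V.
  by move=> m [m_char mED1]; apply: sEV; split => //; exact: (char_chi_le m_char mED mE _ mED1).
have in_tV g A' : measurable A' -> aeeq mu (th g (chi (E `&` D))) (chi A') ->
    A `&` B `<=` A' -> (t g @` V) psi.
  move=> mA' thA' sA'; apply: (image_subset (t g) sEDV).
  rewrite (image_gelfand_supp mED mA' thA'); split => //.
  exact: (char_chi_le psi_char (measurableI _ _ mA mB) mA' sA' psiAB).
have : (t (gs i) @` V `&` t (gs j) @` V) psi.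
  by split; [exact: (in_tV _ _ mA thA (@subIsetl _ A B))|
             exact: (in_tV _ _ mB thB (@subIsetr _ A B))].
by rewrite disj.
Qed.

End Freeness.

Theorem mainTheorem2 (d : measure_display) (T : measurableType d) (R : realType)
  (mu : {measure set T -> \bar R}) (G : Type)
  (mul : G -> G -> G) (one : G) (inv : G -> G)
  (mulA : associative mul) (mul1g : left_id one mul)
  (mulVg : forall g, mul (inv g) g = one)
  (th : G -> (T -> R[i]) -> (T -> R[i]))
  (t : G -> ((T -> R[i]) -> R[i]) -> ((T -> R[i]) -> R[i])) :
  sigma_finite setT mu ->
  (forall g, Linf_automorphism mu (th g)) ->
  (forall g h f, Linf mu f -> aeeq mu (th (mul g h) f) (th g (th h f))) ->
  (forall g, set_bij (max_ideal_space mu) (max_ideal_space mu) (t g)) ->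
  (forall g m z, max_ideal_space mu m -> Linf mu z ->
     gelfand (th g z) (t g m) = gelfand z m) ->
  metrically_free mu th <-> topologically_free mu t.
Proof.
move=> _ th_aut _ t_bij t_gelfand; split.
  exact: metrically_free_topologically_free.
exact: topologically_free_metrically_free.
Qed.
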